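(* Let $N\ge 1$ and let $\lambda,\mu$ be complex parameters. Consider fields $x,\widetilde{x},\widehat{x},\widehat{\widetilde{x}}\in\mathbb{C}^N$ with indices taken modulo $N$. Suppose that $x,\widetilde{x},\widehat{x}$ satisfy, for all $k$, $$(E)\qquad \big(e^{\widetilde{x}_k-x_k}-1\big)\big(\lambda+e^{x_k-\widetilde{x}_{k-1}}\big)=\big(e^{\widehat{x}_k-x_k}-1\big)\big(\mu+e^{x_k-\widehat{x}_{k-1}}\big).$$ Consider the superposition formulas $$(S1)\qquad \big(e^{\widehat{\widetilde{x}}_k-\widehat{x}_k}-1\big)\big(\lambda+e^{x_{k+1}-\widetilde{x}_k}\big)=\big(e^{\widehat{\widetilde{x}}_k-\widetilde{x}_k}-1\big)\big(\mu+e^{x_{k+1}-\widehat{x}_k}\big),$$ $$(S2)\qquad \big(e^{\widetilde{x}_{k+1}-x_{k+1}}-1\big)\big(\lambda+e^{\widehat{x}_{k+1}-\widehat{\widetilde{x}}_k}\big)=\big(e^{\widehat{x}_{k+1}-x_{k+1}}-1\big)\big(\mu+e^{\widetilde{x}_{k+1}-\widehat{\widetilde{x}}_k}\big).$$ Then, by virtue of $(E)$, (S1) and (S2) are equivalent, and if $\widehat{\widetilde{x}}$ is defined by either of them, then for all $k$: $$(E_1)\quad \big(e^{\widetilde{x}_k-x_k}-1\big)\big(\lambda+e^{x_{k+1}-\widetilde{x}_k}\big)=\big(e^{\widehat{\widetilde{x}}_k-\widetilde{x}_k}-1\big)\big(\mu+e^{\widetilde{x}_k-\widehat{\widetilde{x}}_{k-1}}\big),$$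 $$(E_2)\quad \big(e^{\widehat{x}_k-x_k}-1\big)\big(\mu+e^{x_{k+1}-\widehat{x}_k}\big)=\big(e^{\widehat{\widetilde{x}}_k-\widehat{x}_k}-1\big)\big(\lambda+e^{\widehat{x}_k-\widehat{\widetilde{x}}_{k-1}}\big),$$ $$(E_{12})\quad \big(e^{\widehat{\widetilde{x}}_k-\widehat{x}_k}-1\big)\big(\lambda+e^{\widehat{x}_{k+1}-\widehat{\widetilde{x}}_k}\big)=\big(e^{\widehat{\widetilde{x}}_k-\widetilde{x}_k}-1\big)\big(\mu+e^{\widetilde{x}_{k+1}-\widehat{\widetilde{x}}_k}\big).$$
   Context: These are the corner equations for two Bäcklund transformations $F_\lambda,F_\mu$ of the periodic modified Toda lattice $\ddot x_k=\dot x_k(e^{x_{k+1}-x_k}-e^{x_k-x_{k-1}})$, where $F_\lambda:(x,p)\mapsto(\widetilde x,\widetilde p)$ is given by $e^{p_k}=(e^{\widetilde x_k-x_k}-1)(\lambda+e^{x_k-\widetilde x_{k-1}})$, $e^{\widetilde p_k}=(e^{\widetilde x_k-x_k}-1)(\lambda+e^{x_{k+1}-\widetilde x_k})$; hats denote the action of $F_\mu$. *)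

From Stdlib Require Import Reals ZArith.
From Coquelicot Require Import Coquelicot.

Definition cexp (z : C) : C :=
  (exp (Re z) * cos (Im z), exp (Re z) * sin (Im z))%R.

(* A field on the periodic lattice Z/NZ, represented as an N-periodic map Z -> C. *)
Definition periodic (N : Z) (f : Z -> C) : Prop := forall k : Z, f (k + N)%Z = f k.

(* Writing X, T, H, Z for e^x, e^x~, e^x^, e^x^~ (primes for site k+1, Z0 for
   e^x^~_{k-1}), every equation is a rational relation between two or three
   neighbouring sites, and each conclusion is an explicit rational linear
   combination of the hypotheses.  Given (E) at k+1, the difference of the sides of (S2) is a
   nonzero multiple of that of (S1).  (E) at k+1, (S1), (S2) and (E12) are the
   four relations a v = b w, c v = d w, a v' = b w', c v' = d w' of a 2x2
   array, so the first three force the last.  Eliminating H between (S1) at k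
   and (S2) at k-1 leaves (lambda - mu) (E1), and (E2) is (E1) with (x~, lambda)
   and (x^, mu) exchanged. *)
From Stdlib Require Import Reals ZArith Lra.
From Coquelicot Require Import Coquelicot.
Local Open Scope C_scope.

Lemma cexp_add (a b : C) : cexp (a + b) = cexp a * cexp b.
Proof.
  destruct a as [a1 a2], b as [b1 b2]. unfold cexp, Cmult, Cplus; simpl.
  rewrite exp_plus, cos_plus, sin_plus. f_equal; ring.
Qed.

Lemma cexp_neq_0 (a : C) : cexp a <> 0.
Proof.
  destruct a as [a1 a2]. unfold cexp; simpl. intro E.
  assert (Ere := f_equal fst E). assert (Eim := f_equal snd E). simpl in Ere, Eim.
  assert (Hexp := exp_pos a1).
  assert (Hcos : cos a2 = 0%R) by nra.
  assert (Hsin : sin a2 = 0%R) by nra.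
  pose proof (sin2_cos2 a2) as Hpyth. unfold Rsqr in Hpyth.
  rewrite Hcos, Hsin in Hpyth. lra.
Qed.

#[local] Hint Resolve cexp_neq_0 : core.

Lemma cexp_sub (a b : C) : cexp (a - b) = cexp a / cexp b.
Proof.
  replace (cexp a) with (cexp (a - b) * cexp b) by (rewrite <- cexp_add; f_equal; ring).
  field. auto.
Qed.

Lemma Cmult_eq_0_r (k u : C) : k <> 0 -> k * u = 0 -> u = 0.
Proof. intros Hk E. replace u with (k * u / k) by (field; auto). rewrite E. field. auto. Qed.

Lemma Cmult_neq_0_l (u v : C) : u * v <> 0 -> u <> 0.
Proof. intros H E. apply H. rewrite E. ring. Qed.

Lemma Cmult_neq_0_r (u v : C) : u * v <> 0 -> v <> 0.
Proof. intros H E. apply H. rewrite E. ring. Qed.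

Lemma Cdiv_neq_0 (u v : C) : u <> 0 -> v <> 0 -> u / v <> 0.
Proof.
  intros Hu Hv E. apply Hu.
  replace u with (u / v * v) by (field; auto). rewrite E. ring.
Qed.

Lemma Cplus_div_neq_0 (m a h : C) : h <> 0 -> m + a / h <> 0 -> m * h + a <> 0.
Proof.
  intros Hh Hn E. apply Hn.
  replace (m + a / h) with ((m * h + a) / h) by (field; auto).
  rewrite E. field. auto.
Qed.

Lemma cross_mul_transfer (a b c d v w v' w' : C) :
  c * v = d * w -> a * v' = b * w' -> a * v = b * w -> a <> 0 -> v <> 0 ->
  c * v' = d * w'.
Proof.
  intros Hcv Hav' Hav Ha Hv. apply Ceq_minus.
  apply (Cmult_eq_0_r (a * v)); [now apply Cmult_neq_0 |].
  transitivity ((c * v) * (a * v') - (a * v) * (d * w')); [ring |].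
  rewrite Hcv, Hav', Hav. ring.
Qed.

Section Corner.

Variables (l m T H X' T' H' Z : C).
Hypotheses (HT : T <> 0) (HH : H <> 0) (HX' : X' <> 0) (HZ : Z <> 0).

Lemma S2_diff_combination :
  m + X' / H <> 0 ->
  (T'/X' - 1) * (l + H'/Z) - (H'/X' - 1) * (m + T'/Z)
  = (T'/X' - 1) * (X'/Z) / (m + X'/H)
      * ((Z/H - 1) * (l + X'/T) - (Z/T - 1) * (m + X'/H))
    + (m + X'/Z) / (m + X'/H)
      * ((T'/X' - 1) * (l + X'/T) - (H'/X' - 1) * (m + X'/H)).
Proof. intro Hm. field. repeat split; auto. now apply Cplus_div_neq_0. Qed.

Lemma S1_iff_S2_corner :
  T'/X' - 1 <> 0 -> m + X'/H <> 0 ->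
  (T'/X' - 1) * (l + X'/T) = (H'/X' - 1) * (m + X'/H) ->
  (Z/H - 1) * (l + X'/T) = (Z/T - 1) * (m + X'/H) <->
  (T'/X' - 1) * (l + H'/Z) = (H'/X' - 1) * (m + T'/Z).
Proof.
  intros Ht Hm HE. apply Ceq_minus in HE.
  pose proof (S2_diff_combination Hm) as Hcomb.
  rewrite HE, Cmult_0_r, Cplus_0_r in Hcomb.
  split; intro Hs; apply Ceq_minus; apply Ceq_minus in Hs.
  - rewrite Hcomb, Hs. ring.
  - apply (Cmult_eq_0_r ((T'/X' - 1) * (X'/Z) / (m + X'/H))).
    + repeat apply Cdiv_neq_0; auto. now apply Cmult_neq_0, Cdiv_neq_0.
    + now rewrite <- Hcomb.
Qed.

End Corner.

(* Cleared of denominators, both hypotheses are linear in [H], with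
   coefficients [l T + X' + m (Z - T)] and [m Z0 + X]; their resultant is
   [(m - l)] times (E1). *)
Lemma E1_corner (l m X T H X' Z Z0 : C) :
  l <> m -> X <> 0 -> T <> 0 -> H <> 0 -> Z0 <> 0 ->
  (Z/H - 1) * (l + X'/T) = (Z/T - 1) * (m + X'/H) ->
  (T/X - 1) * (l + H/Z0) = (H/X - 1) * (m + T/Z0) ->
  (T/X - 1) * (l + X'/T) = (Z/T - 1) * (m + T/Z0).
Proof.
  intros Hlm HX HT HH HZ0 HS1 HS2.
  apply Ceq_minus in HS1, HS2. apply Ceq_minus.
  apply (Cmult_eq_0_r (m - l)); [now apply Cminus_eq_contra |].
  transitivity ((m + X/Z0) * (H/X)
                  * ((Z/H - 1) * (l + X'/T) - (Z/T - 1) * (m + X'/H))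
                - (l + X'/T + m * (Z/T - 1))
                  * ((T/X - 1) * (l + H/Z0) - (H/X - 1) * (m + T/Z0))).
  - field. auto.
  - rewrite HS1, HS2. ring.
Qed.

Lemma forall_iff {A : Type} (P Q : A -> Prop) :
  (forall a, P a <-> Q a) -> (forall a, P a) <-> (forall a, Q a).
Proof. intro HPQ. split; intros HP a; apply HPQ, HP. Qed.

Lemma iff_and_or_elim (P Q R : Prop) :
  (P <-> Q) -> (P -> Q -> R) -> (P <-> Q) /\ (P \/ Q -> R).
Proof. tauto. Qed.

Theorem theorem7 (N : Z) (lam mu : C) (x xt xh xht : Z -> C) :
  (1 <= N)%Z ->
  periodic N x -> periodic N xt -> periodic N xh -> periodic N xht ->
  lam <> mu ->
  (forall k : Z,
     (cexp (xt k - x k) - 1) * (lam + cexp (x k - xt (k - 1)%Z)) <> 0) ->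
  (forall k : Z,
     (cexp (xt k - x k) - 1) * (lam + cexp (x (k + 1)%Z - xt k)) <> 0) ->
  (forall k : Z,
     (cexp (xh k - x k) - 1) * (mu + cexp (x (k + 1)%Z - xh k)) <> 0) ->
  (forall k : Z,
     (cexp (xt k - x k) - 1) * (lam + cexp (x k - xt (k - 1)%Z))
     = (cexp (xh k - x k) - 1) * (mu + cexp (x k - xh (k - 1)%Z))) ->
  let S1 := forall k : Z,
     (cexp (xht k - xh k) - 1) * (lam + cexp (x (k + 1)%Z - xt k))
     = (cexp (xht k - xt k) - 1) * (mu + cexp (x (k + 1)%Z - xh k)) in
  let S2 := forall k : Z,
     (cexp (xt (k + 1)%Z - x (k + 1)%Z) - 1) * (lam + cexp (xh (k + 1)%Z - xht k))
     = (cexp (xh (k + 1)%Z - x (k + 1)%Z) - 1) * (mu + cexp (xt (k + 1)%Z - xht k)) in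
  (S1 <-> S2) /\
  ((S1 \/ S2) ->
   forall k : Z,
     (cexp (xt k - x k) - 1) * (lam + cexp (x (k + 1)%Z - xt k))
       = (cexp (xht k - xt k) - 1) * (mu + cexp (xt k - xht (k - 1)%Z)) /\
     (cexp (xh k - x k) - 1) * (mu + cexp (x (k + 1)%Z - xh k))
       = (cexp (xht k - xh k) - 1) * (lam + cexp (xh k - xht (k - 1)%Z)) /\
     (cexp (xht k - xh k) - 1) * (lam + cexp (xh (k + 1)%Z - xht k))
       = (cexp (xht k - xt k) - 1) * (mu + cexp (xt (k + 1)%Z - xht k))).
Proof.
  intros _ _ _ _ _ Hlm _ Hnd_t Hnd_h HE; cbv zeta.
  repeat setoid_rewrite cexp_sub.
  repeat setoid_rewrite cexp_sub in Hnd_t; repeat setoid_rewrite cexp_sub in Hnd_h.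
  repeat setoid_rewrite cexp_sub in HE.
  assert (HE_next : forall k, _) by (intro k; specialize (HE (k + 1)%Z);
                                    rewrite Z.add_simpl_r in HE; exact HE).
  apply iff_and_or_elim.
  - apply forall_iff. intro k.
    apply S1_iff_S2_corner; auto.
    + eapply Cmult_neq_0_l, (Hnd_t (k + 1)%Z).
    + eapply Cmult_neq_0_r, Hnd_h.
  - intros HS1 HS2 k.
    pose proof (HS2 (k - 1)%Z) as HS2_prev. rewrite Z.sub_add in HS2_prev.
    split; [| split].
    + apply (E1_corner lam mu _ _ (cexp (xh k))); auto.
    + apply (E1_corner mu lam _ _ (cexp (xt k))); auto.
    + eapply cross_mul_transfer; [apply HS1 | apply HS2 | apply HE_next | |].
      * eapply Cmult_neq_0_l, (Hnd_t (k + 1)%Z).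
      * eapply Cmult_neq_0_r, Hnd_t.
Qed.
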